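(* Let $p$ be a prime, $\alpha\ge1$, $\beta\ge0$, and let $\delta\ge(\beta(p-1)+1)p^{\alpha-1}$ be an integer. Then $p^\beta$ divides $\binom{\delta}{x}_{p^\alpha}$ for every $x\in\mathbb{Z}_{p^\alpha}$.
   Context: For integers $d\ge0$, $q\ge1$ and a residue class $x\in\mathbb{Z}_q=\mathbb{Z}/q\mathbb{Z}$, $\binom{d}{x}_q:=\sum_{\hat x\in x,\ \hat x\ge0}(-1)^{\hat x}\binom{d}{\hat x}\in\mathbb{Z}$, the sum running over the nonnegative integer representatives $\hat x$ of $x$ (only $\hat x\le d$ give nonzero terms). *)

From mathcomp Require Import all_boot all_order all_algebra.
Set Implicit Arguments. Unset Strict Implicit. Unset Printing Implicit Defensive.
Import GRing.Theory Num.Theory.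
Local Open Scope ring_scope.

(* Only k <= d contribute,
   so the sum is taken over 0 <= k < d+1 with k = x (mod q). *)
Definition binom_q (d q : nat) (x : 'I_q) : int :=
  \sum_(0 <= k < d.+1 | (k %% q == x %% q)%N) (-1) ^+ k * ('C(d, k))%:Z.
Arguments binom_q d q x : clear implicits.

From mathcomp Require Import all_boot all_order all_algebra.
From mathcomp Require Import ring zify.
Set Implicit Arguments.
Unset Strict Implicit.
Unset Printing Implicit Defensive.
Import GRing.Theory Num.Theory.
Local Open Scope ring_scope.

(* Write q = p^alpha and n = p^(alpha-1), so q = n p.  In Z[X],
   binom_q delta q x is the sum of the coefficients of (1 - X)^delta of index
   congruent to x modulo q.  Such residue-class coefficient sums vanish on
   multiples of X^q - 1, hence it suffices to show that (1 - X)^delta lies in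
   the ideal I_beta = (X^q - 1, p^beta) of Z[X].  Put u = 1 - X^n and
   Phi = 1 + X^n + ... + X^(n(p-1)), so that u Phi = -(X^q - 1).  Reducing
   modulo p (Frobenius in F_p[X]) gives
     (1 - X)^n = u + p h        and        u^(p-1) = Phi + p g.
   From the second relation u^(k(p-1)+1) lies in I_k for every k; expanding
   (u + p h)^(beta(p-1)+1) binomially then puts (1 - X)^(n(beta(p-1)+1)),
   and hence (1 - X)^delta, in I_beta. *)

Lemma one_sub_exp_pchar (R : comNzRingType) (p m : nat) (y : R) :
  p \in [pchar R] -> (1 - y) ^+ (p ^ m)%N = 1 - y ^+ (p ^ m)%N.
Proof.
move=> charRp.
have pnat_pm : [pchar R].-nat (p ^ m)%N.
  by rewrite (eq_pnat _ (pcharf_eq charRp)) pnatX pnat_id // (pcharf_prime charRp).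
by rewrite exprDn_pchar // exprNn_pchar // expr1n.
Qed.

Lemma geometric_sum_pchar (R : idomainType) (p : nat) (y : R) :
  p \in [pchar R] -> y != 1 -> \sum_(i < p) y ^+ i = (1 - y) ^+ (p - 1).
Proof.
move=> charRp y_neq1.
have telescope : (1 - y) * \sum_(i < p) y ^+ i = 1 - y ^+ p.
  rewrite -[in RHS](expr1n _ p) subrXX.
  by congr (_ * _); apply: eq_bigr => i _; rewrite expr1n mul1r.
have frob : (1 - y) ^+ p = 1 - y ^+ p.
  by have := one_sub_exp_pchar 1 y charRp; rewrite expn1.
have nz : 1 - y != 0 by rewrite subr_eq0 eq_sym.
apply: (mulfI nz); rewrite telescope -exprS subn1 prednK ?frob //.
exact: prime_gt0 (pcharf_prime charRp).
Qed.

Local Notation reduce p := (map_poly (fun c : int => (c%:~R : 'F_p))).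

Lemma congr_modp_poly (p : nat) (P Q : {poly int}) : prime p ->
  reduce p P = reduce p Q -> exists h, P = Q + (p%:Z)%:P * h.
Proof.
move=> p_pr eq_red.
exists (\poly_(i < size (P - Q)) (((P - Q)`_i) %/ p)%Z).
apply/eqP; rewrite addrC -subr_eq; apply/eqP/polyP => i.
rewrite coefCM coef_poly; case: ltnP => hi; last by rewrite nth_default // mulr0.
have red0 : (((P - Q)`_i)%:~R : 'F_p) = 0.
  by rewrite -(coef_map_id0 _ _ (mulr0z 1)) rmorphB /= eq_red subrr coef0.
have p_dvd : (p%:Z %| (P - Q)`_i)%Z by rewrite (dvdz_pcharf (pchar_Fp p_pr)) red0.
by rewrite mulrC divzK.
Qed.

Lemma one_subX_exp_modp (p m : nat) : prime p ->
  exists h : {poly int}, (1 - 'X) ^+ (p ^ m)%N = (1 - 'X^(p ^ m)%N) + (p%:Z)%:P * h.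
Proof.
move=> p_pr; apply: congr_modp_poly => //.
rewrite rmorphXn /= !rmorphB /= rmorph1 map_polyX map_polyXn.
by apply: one_sub_exp_pchar; rewrite pchar_poly pchar_Fp.
Qed.

Lemma one_subXn_exp_modp (p n : nat) : prime p -> (0 < n)%N ->
  exists g : {poly int},
    (1 - 'X^n) ^+ (p - 1) = \sum_(i < p) ('X^n) ^+ i + (p%:Z)%:P * g.
Proof.
move=> p_pr n_gt0; apply: congr_modp_poly => //.
rewrite rmorphXn /= rmorphB /= rmorph1 map_polyXn rmorph_sum /=.
under eq_bigr do rewrite rmorphXn /= map_polyXn.
symmetry; apply: geometric_sum_pchar; first by rewrite pchar_poly pchar_Fp.
by apply/eqP => /(congr1 (fun P : {poly 'F_p} => size P)); rewrite size_polyXn size_poly1 => -[n0]; rewrite n0 in n_gt0.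
Qed.

Section IdealCalculus.
Variables (R : comPzRingType) (M r : R).

Definition in_ideal (k : nat) (P : R) := exists A B, P = A * M + r ^+ k * B.

Lemma in_idealD k P Q : in_ideal k P -> in_ideal k Q -> in_ideal k (P + Q).
Proof. by move=> [A [B ->]] [C [D ->]]; exists (A + C), (B + D); ring. Qed.

Lemma in_idealMr k P Q : in_ideal k P -> in_ideal k (P * Q).
Proof. by move=> [A [B ->]]; exists (A * Q), (B * Q); ring. Qed.

Lemma in_idealMl k P Q : in_ideal k P -> in_ideal k (Q * P).
Proof. by rewrite mulrC; apply: in_idealMr. Qed.

Lemma in_idealMn k P c : in_ideal k P -> in_ideal k (P *+ c).
Proof. by rewrite -mulr_natr; apply: in_idealMr. Qed.

Lemma in_idealM j k P Q :
  in_ideal j P -> in_ideal k Q -> in_ideal (j + k) (P * Q).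
Proof.
move=> [A [B ->]] [C [D ->]].
by exists (A * C * M + A * r ^+ k * D + r ^+ j * B * C), (B * D); rewrite exprD; ring.
Qed.

Lemma in_ideal_rexp k B : in_ideal k (r ^+ k * B).
Proof. by exists 0, B; rewrite mul0r add0r. Qed.

Lemma in_ideal_M k A : in_ideal k (A * M).
Proof. by exists A, 0; rewrite mulr0 addr0. Qed.

Lemma in_ideal_le j k P : (j <= k)%N -> in_ideal k P -> in_ideal j P.
Proof.
by move=> le_jk [A [B ->]]; exists A, (r ^+ (k - j) * B); rewrite mulrA -exprD subnKC.
Qed.

Lemma in_ideal_sum k n (F : 'I_n -> R) :
  (forall i, in_ideal k (F i)) -> in_ideal k (\sum_(i < n) F i).
Proof.
by move=> inF; apply: big_ind => //; [exists 0, 0; ring | exact: in_idealD].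
Qed.

(* Assume u Phi = -M and u^m = Phi + r g.  Then u^(m+1) = r g u modulo M, and
   by induction u^(k m + 1) lies in (M, r^k). *)
Variables (u Phi g : R) (m : nat).
Hypothesis u_Phi : u * Phi = - M.
Hypothesis u_exp : u ^+ m = Phi + r * g.

Lemma exp_u_mod_M k : exists A, u ^+ (k * m + 1) = r ^+ k * g ^+ k * u + A * M.
Proof.
elim: k => [|k [A IH]]; first by exists 0; rewrite mul0n add0n expr1 !expr0; ring.
have -> : (k.+1 * m + 1 = (k * m + 1) + m)%N by rewrite mulSn; lia.
exists (- r ^+ k * g ^+ k + A * (Phi + r * g)).
rewrite exprD IH u_exp !exprS.
have -> : M = - (u * Phi) by rewrite u_Phi opprK.
ring.
Qed.

Lemma in_ideal_exp_u k j : (k * m < j)%N -> in_ideal k (u ^+ j).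
Proof.
move=> lt_km_j; have [A eqA] := exp_u_mod_M k.
rewrite -(subnKC lt_km_j) exprD -addn1 eqA; apply: in_idealMr.
by apply: in_idealD; [rewrite -mulrA; apply: in_ideal_rexp | apply: in_ideal_M].
Qed.

(* This survives perturbing u by a multiple of r: (u + r h)^(b m + 1) lies in
   (M, r^b), since each binomial term u^(b m + 1 - i) (r h)^i lies in
   (M, r^(b - i)) (r^i) when i <= b, and in (r^b) otherwise. *)
Lemma in_ideal_exp_perturbed h b :
  (0 < m)%N -> in_ideal b ((u + r * h) ^+ (b * m + 1)).
Proof.
move=> m_gt0; rewrite exprDn; apply: in_ideal_sum => i; apply: in_idealMn.
rewrite exprMn; have i_le : (i <= b * m + 1)%N by rewrite -ltnS ltn_ord.
case: (leqP i b) => [le_ib | lt_bi].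
  rewrite mulrA; apply: (@in_ideal_le b (b - i + i)); first by rewrite subnK.
  apply: in_idealMr; apply: in_idealM; last by rewrite -[r ^+ i]mulr1; apply: in_ideal_rexp.
  by apply: in_ideal_exp_u; nia.
by apply: in_idealMl; rewrite -(subnKC (ltnW lt_bi)) exprD -mulrA; apply: in_ideal_rexp.
Qed.

End IdealCalculus.

Lemma one_subX_exp_in_ideal (p alpha beta delta : nat) :
  prime p -> (1 <= alpha)%N ->
  ((beta * (p - 1) + 1) * p ^ (alpha - 1) <= delta)%N ->
  in_ideal ('X^(p ^ alpha) - 1) (p%:Z)%:P beta ((1 - 'X : {poly int}) ^+ delta).
Proof.
move=> p_pr alpha_ge1 le_delta; set n := (p ^ (alpha - 1))%N.
have n_gt0 : (0 < n)%N by rewrite expn_gt0 prime_gt0.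
have [h eq_h] := one_subX_exp_modp (alpha - 1) p_pr.
have [g eq_g] := one_subXn_exp_modp p_pr n_gt0.
have u_Phi : (1 - 'X^n) * \sum_(i < p) ('X^n) ^+ i = - ('X^(p ^ alpha) - 1) :> {poly int}.
  have q_eq : (p ^ alpha = n * p)%N by rewrite -expnSr subn1 prednK.
  rewrite opprB q_eq exprM -[in RHS](expr1n _ p) subrXX.
  by congr (_ * _); apply: eq_bigr => i _; rewrite expr1n mul1r.
have pm1_gt0 : (0 < p - 1)%N by rewrite subn_gt0 prime_gt1.
have := in_ideal_exp_perturbed u_Phi eq_g h beta pm1_gt0.
rewrite -eq_h -exprM => in_I.
have le_n_delta : (n * (beta * (p - 1) + 1) <= delta)%N by rewrite mulnC.
by rewrite -(subnKC le_n_delta) exprD; apply: in_idealMr.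
Qed.

Definition residue_sum (q y N : nat) (P : {poly int}) : int :=
  \sum_(0 <= k < N | (k %% q == y %% q)%N) P`_k.

Lemma residue_sumD q y N (P Q : {poly int}) :
  residue_sum q y N (P + Q) = residue_sum q y N P + residue_sum q y N Q.
Proof. by rewrite /residue_sum -big_split; apply: eq_bigr => k _; rewrite coefD. Qed.

Lemma residue_sumB q y N (P Q : {poly int}) :
  residue_sum q y N (P - Q) = residue_sum q y N P - residue_sum q y N Q.
Proof. by rewrite /residue_sum -sumrB; apply: eq_bigr => k _; rewrite coefB. Qed.

Lemma residue_sumCM q y N (c : int) (B : {poly int}) :
  residue_sum q y N (c%:P * B) = c * residue_sum q y N B.
Proof. by rewrite /residue_sum mulr_sumr; apply: eq_bigr => k _; rewrite coefCM. Qed.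

(* Indices from the size of P on contribute nothing. *)
Lemma residue_sum_widen q y N N' (P : {poly int}) :
  (N' <= N)%N -> (size P <= N')%N -> residue_sum q y N P = residue_sum q y N' P.
Proof.
move=> le_N'N le_P; rewrite /residue_sum (big_cat_nat (leq0n N') le_N'N) //=.
rewrite [X in _ + X]big1_seq ?addr0 // => k /andP[_].
by rewrite mem_index_iota => /andP[le_k _]; rewrite nth_default // (leq_trans le_P).
Qed.

(* Multiplying by X^q shifts indices by q, preserving residues modulo q. *)
Lemma residue_sum_mulXq q y N (A : {poly int}) : (size A + q <= N)%N ->
  residue_sum q y N (A * 'X^q) = residue_sum q y N A.
Proof.
move=> le_N; have le_qN : (q <= N)%N := leq_trans (leq_addl _ _) le_N.
rewrite /residue_sum (big_cat_nat (leq0n q) le_qN) /= big1_seq ?add0r; last first.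
  by move=> k /andP[_]; rewrite mem_index_iota => /andP[_ lt_kq]; rewrite coefMXn lt_kq.
rewrite -{1}(add0n q) big_addn.
under eq_big => [k | k _].
- by rewrite modnDr; over.
- by rewrite coefMXn ltnNge leq_addl addnK; over.
by symmetry; apply: residue_sum_widen; lia.
Qed.

(* Residue-class sums of elements of (X^q - 1, r^k) are divisible by r^k,
   because they vanish on multiples of X^q - 1. *)
Lemma residue_sum_in_ideal q y N k (r : int) (P : {poly int}) :
  (size P <= N)%N -> in_ideal ('X^q - 1) r%:P k P ->
  (r ^+ k %| residue_sum q y N P)%Z.
Proof.
move=> le_N [A [B eq_P]]; set N' := (N + (size A + q))%N.
have vanish : residue_sum q y N' (A * ('X^q - 1)) = 0.
  by rewrite mulrBr mulr1 residue_sumB residue_sum_mulXq ?subrr // leq_addl.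
rewrite -(@residue_sum_widen q y N') ?leq_addr // eq_P residue_sumD vanish add0r.
by rewrite -polyC_exp residue_sumCM dvdz_mulr.
Qed.

Lemma coef_one_subX_exp (d k : nat) :
  ((1 - 'X : {poly int}) ^+ d)`_k = (-1) ^+ k * ('C(d, k))%:Z.
Proof.
rewrite addrC exprD1n coef_sum.
under eq_bigr => i _ do rewrite exprNn coefMn -polyC1 -polyCN -polyC_exp coefCM coefXn.
case: (ltnP k d.+1) => [lt_kd | lt_dk].
- rewrite (bigD1 (Ordinal lt_kd)) //= eqxx mulr1 big1 ?addr0 => [|i].
    by rewrite -mulr_natr natz.
  by rewrite -val_eqE eq_sym => /negbTE ->; rewrite mulr0 mul0rn.
- rewrite bin_small // mulr0 big1 // => i _.
  by rewrite (gtn_eqF (leq_trans (ltn_ord i) lt_dk)) mulr0 mul0rn.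
Qed.

Theorem corollary3p5 (p alpha beta delta : nat) :
  prime p -> (1 <= alpha)%N ->
  ((beta * (p - 1) + 1) * p ^ (alpha - 1) <= delta)%N ->
  forall x : 'I_(p ^ alpha),
    ((p ^ beta)%:Z %| binom_q delta (p ^ alpha) x)%Z.
Proof.
move=> p_pr alpha_ge1 le_delta x.
have -> : binom_q delta (p ^ alpha) x
          = residue_sum (p ^ alpha) x delta.+1 ((1 - 'X) ^+ delta).
  by apply: eq_bigr => k _; rewrite coef_one_subX_exp.
have size_le : (size ((1 - 'X : {poly int}) ^+ delta) <= delta.+1)%N.
  apply: leq_trans (size_poly_exp_leq _ _) _.
  by rewrite -opprB size_polyN size_XsubC mul1n.
rewrite -[Posz _]natz natrX natz; apply: residue_sum_in_ideal size_le _.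
exact: one_subX_exp_in_ideal.
Qed.
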